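(* For every abelian category $\mathcal{A}$, the category $\widetilde{Q}\mathcal{A}$ is filtered.
   Context: For an abelian category $\mathcal{A}$, the category $\widetilde{Q}\mathcal{A}$ has the same objects as $\mathcal{A}$. A morphism $M\to M'$ is represented by a span $M\overset{p}{\twoheadleftarrow}N\overset{\iota}{\hookrightarrow}M'$ with $p$ an epimorphism and $\iota$ a monomorphism; two spans $(p_f,\iota_f)$ via $N$ and $(p_g,\iota_g)$ via $N'$ represent the same morphism if they are related by the equivalence relation generated by: $f\sim g$ whenever there is a monomorphism $j:N\hookrightarrow N'$ with $p_g\circ j=p_f$ and $\iota_g\circ j=\iota_f$ (in particular isomorphic spans are identified). Composition is induced by composing spans via fiber products (as in Quillen's Q-construction). *)

(* Hom-sets are types with
   Leibniz equality (strict categories). *)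
From Stdlib Require Import Relations.

Set Implicit Arguments.
Unset Strict Implicit.

Record Category := {
  Obj :> Type;
  Hom : Obj -> Obj -> Type;
  idm : forall A, Hom A A;
  comp : forall A B C, Hom B C -> Hom A B -> Hom A C;
  comp_assoc : forall A B C D (h : Hom C D) (g : Hom B C) (f : Hom A B),
      comp h (comp g f) = comp (comp h g) f;
  comp_id_l : forall A B (f : Hom A B), comp (idm B) f = f;
  comp_id_r : forall A B (f : Hom A B), comp f (idm A) = f
}.

Arguments Hom {c} _ _.
Arguments idm {c} _.
Arguments comp {c A B C} _ _.

Section Abelian.
Variable C : Category.

Definition Mono {A B : C} (f : Hom A B) : Prop :=
  forall Z (g h : Hom Z A), comp f g = comp f h -> g = h.

Definition Epi {A B : C} (f : Hom A B) : Prop :=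
  forall Z (g h : Hom B Z), comp g f = comp h f -> g = h.

Definition ex_unique_hom {A B : C} (P : Hom A B -> Prop) : Prop :=
  exists u, P u /\ forall u', P u' -> u' = u.

Definition is_initial (Z : C) : Prop := forall A : C, ex_unique_hom (fun _ : Hom Z A => True).
Definition is_terminal (Z : C) : Prop := forall A : C, ex_unique_hom (fun _ : Hom A Z => True).
Definition is_zero_obj (Z : C) : Prop := is_initial Z /\ is_terminal Z.

Definition is_zero_mor {A B : C} (f : Hom A B) : Prop :=
  exists (Z : C) (a : Hom A Z) (b : Hom Z B), is_zero_obj Z /\ f = comp b a.

Definition is_kernel {A B K : C} (f : Hom A B) (k : Hom K A) : Prop :=
  is_zero_mor (comp f k) /\
  forall (Z : C) (g : Hom Z A), is_zero_mor (comp f g) ->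
    ex_unique_hom (fun u : Hom Z K => comp k u = g).

Definition is_cokernel {A B Q : C} (f : Hom A B) (c : Hom B Q) : Prop :=
  is_zero_mor (comp c f) /\
  forall (Z : C) (g : Hom B Z), is_zero_mor (comp g f) ->
    ex_unique_hom (fun u : Hom Q Z => comp u c = g).

Definition is_product {A B P : C} (p1 : Hom P A) (p2 : Hom P B) : Prop :=
  forall (Z : C) (f : Hom Z A) (g : Hom Z B),
    ex_unique_hom (fun u : Hom Z P => comp p1 u = f /\ comp p2 u = g).

Definition is_coproduct {A B S : C} (i1 : Hom A S) (i2 : Hom B S) : Prop :=
  forall (Z : C) (f : Hom A Z) (g : Hom B Z),
    ex_unique_hom (fun u : Hom S Z => comp u i1 = f /\ comp u i2 = g).

(* Freyd's definition: zero object, binary products and coproducts,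
   kernels and cokernels, every mono is a kernel, every epi a cokernel. *)
Definition IsAbelian : Prop :=
  (exists Z : C, is_zero_obj Z) /\
  (forall A B : C, exists (P : C) (p1 : Hom P A) (p2 : Hom P B), is_product p1 p2) /\
  (forall A B : C, exists (S : C) (i1 : Hom A S) (i2 : Hom B S), is_coproduct i1 i2) /\
  (forall (A B : C) (f : Hom A B), exists (K : C) (k : Hom K A), is_kernel f k) /\
  (forall (A B : C) (f : Hom A B), exists (Q : C) (c : Hom B Q), is_cokernel f c) /\
  (forall (K A : C) (m : Hom K A), Mono m -> exists (B : C) (f : Hom A B), is_kernel f m) /\
  (forall (B Q : C) (e : Hom B Q), Epi e -> exists (A : C) (f : Hom A B), is_cokernel f e).

Definition is_pullback {X Y W P : C} (f : Hom X W) (g : Hom Y W)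
    (p1 : Hom P X) (p2 : Hom P Y) : Prop :=
  comp f p1 = comp g p2 /\
  forall (Z : C) (a : Hom Z X) (b : Hom Z Y), comp f a = comp g b ->
    ex_unique_hom (fun u : Hom Z P => comp p1 u = a /\ comp p2 u = b).

(* The category Q~A : spans  M <<-p- N -i->> M'                        *)
Record Span (M M' : C) := {
  apex : C;
  sp : Hom apex M;
  si : Hom apex M';
  sp_epi : Epi sp;
  si_mono : Mono si
}.
Arguments apex {M M'} _.
Arguments sp {M M'} _.
Arguments si {M M'} _.

Definition span_le {M M' : C} (f g : Span M M') : Prop :=
  exists j : Hom (apex f) (apex g),
    Mono j /\ comp (sp g) j = sp f /\ comp (si g) j = si f.

(* equality of morphisms of Q~A: the equivalence relation generated *)
Definition span_equiv {M M' : C} : relation (Span M M') :=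
  clos_refl_sym_trans (Span M M') span_le.

(* u is (a representative of) the composite  t o s  computed via the fiber
   product of  si s : N -> M'  and  sp t : N' -> M'  (Quillen's rule). *)
Definition is_span_comp {M M' M'' : C} (s : Span M M') (t : Span M' M'')
    (u : Span M M'') : Prop :=
  exists (p1 : Hom (apex u) (apex s)) (p2 : Hom (apex u) (apex t)),
    is_pullback (si s) (sp t) p1 p2 /\
    sp u = comp (sp s) p1 /\ si u = comp (si t) p2.

(* Q~A is filtered:
   (i) it is nonempty;
   (ii) any two objects admit morphisms to a common object;
   (iii) any two parallel morphisms f, g : M -> M' are equalized by some
         h : M' -> M'', i.e. h o f = h o g in Q~A. *)
Definition QtildeFiltered : Prop :=
  (exists M : C, True) /\
  (forall M1 M2 : C, exists (N : C) (f1 : Span M1 N) (f2 : Span M2 N), True) /\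
  (forall (M M' : C) (f g : Span M M'),
     exists (M'' : C) (h : Span M' M'') (hf hg : Span M M''),
       is_span_comp f h hf /\ is_span_comp g h hg /\ span_equiv hf hg).

End Abelian.

(* Only two pieces of the abelian structure are used: a zero object, which
   makes every hom-set inhabited, and binary products, whose projections are
   then split epimorphisms.  Nonemptiness is witnessed by the zero object;
   two objects M1, M2 both map to M1 x M2 via the spans M_k = M_k >-> M1 x M2
   given by sections of the projections.  For the equalizing condition, take
   K = M' x M and h = (M' <<-pr1- K = K).  Composing any span
   f = (M <<-p- N >-i-> M') with h is computed by the pullback of i along pr1,
   which is N x M mapping to K by i x id.  This composite is related, through
   the span (M <<-p- N >-<i,p>-> K), to the span (M <<-pr2- K = K), which does
   not depend on f.  Hence h o f = h o g for any parallel f, g. *)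
From Stdlib Require Import Relations.

Set Implicit Arguments.
Unset Strict Implicit.

Section Generalities.
Variable C : Category.

Lemma mono_of_comp_mono (A B D : C) (g : Hom A B) (a : Hom B D) :
  Mono (comp a g) -> Mono g.
Proof.
  intros Hag Z u v E. apply Hag. rewrite <- !comp_assoc, E. reflexivity.
Qed.

Lemma mono_id (A : C) : Mono (idm A).
Proof. intros Z u v E. rewrite !comp_id_l in E. exact E. Qed.

Lemma split_mono (A B : C) (f : Hom A B) (r : Hom B A) :
  comp r f = idm A -> Mono f.
Proof.
  intros E. apply (@mono_of_comp_mono _ _ _ f r). rewrite E. apply mono_id.
Qed.

Lemma split_epi (A B : C) (f : Hom A B) (s : Hom B A) :
  comp f s = idm B -> Epi f.
Proof.
  intros E Z u v H.
  rewrite <- (comp_id_r u), <- (comp_id_r v), <- E, !comp_assoc, H.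
  reflexivity.
Qed.

Lemma epi_comp (A B D : C) (f : Hom A B) (g : Hom B D) :
  Epi f -> Epi g -> Epi (comp g f).
Proof.
  intros Hf Hg Z u v E. apply Hg, Hf. rewrite <- !comp_assoc. exact E.
Qed.

Lemma product_ext (A B P : C) (p1 : Hom P A) (p2 : Hom P B)
    (HP : is_product p1 p2) (Z : C) (u v : Hom Z P) :
  comp p1 u = comp p1 v -> comp p2 u = comp p2 v -> u = v.
Proof.
  intros E1 E2. destruct (HP Z (comp p1 u) (comp p2 u)) as [w [_ Uw]].
  rewrite (Uw u), (Uw v); auto.
Qed.

Lemma product_sym (A B P : C) (p1 : Hom P A) (p2 : Hom P B) :
  is_product p1 p2 -> is_product p2 p1.
Proof.
  intros HP Z f g. destruct (HP Z g f) as [u [[Hu1 Hu2] Uu]].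
  exists u. split; [split; assumption|].
  intros u' [H1 H2]. apply Uu. split; assumption.
Qed.

Lemma zero_obj_homs (Z : C) :
  is_zero_obj Z -> forall A B : C, inhabited (Hom A B).
Proof.
  intros [Hini Hter] A B.
  destruct (Hter A) as [a _]. destruct (Hini B) as [b _].
  exact (inhabits (comp b a)).
Qed.

(* When all hom-sets are inhabited, a product projection has a section,
   namely the pairing of the identity with an arbitrary morphism. *)
Lemma product_proj_section (A B P : C) (p1 : Hom P A) (p2 : Hom P B) :
  (forall X Y : C, inhabited (Hom X Y)) -> is_product p1 p2 ->
  exists s : Hom A P, comp p1 s = idm A.
Proof.
  intros Hhom HP. destruct (Hhom A B) as [z].
  destruct (HP A (idm A) z) as [s [[Hs _] _]]. exists s. exact Hs.
Qed.

Lemma pullback_along_projection (X Y W K P : C) (f : Hom X W)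
    (pW : Hom K W) (pY : Hom K Y) (qX : Hom P X) (qY : Hom P Y)
    (fxid : Hom P K) :
  is_product pW pY -> is_product qX qY ->
  comp pW fxid = comp f qX -> comp pY fxid = qY ->
  is_pullback f pW qX fxid.
Proof.
  intros HK HP E1 E2. split; [symmetry; exact E1|].
  intros Z a b Hab.
  destruct (HP Z a (comp pY b)) as [u [[Hu1 Hu2] _]].
  exists u. split.
  - split; [exact Hu1|]. apply (product_ext HK).
    + rewrite comp_assoc, E1, <- comp_assoc, Hu1. exact Hab.
    + rewrite comp_assoc, E2. exact Hu2.
  - intros u' [H1 H2]. apply (product_ext HP).
    + rewrite H1, Hu1. reflexivity.
    + rewrite Hu2, <- E2, <- comp_assoc, H2. reflexivity.
Qed.

Lemma mono_product_map (X Y W K P : C) (f : Hom X W)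
    (pW : Hom K W) (pY : Hom K Y) (qX : Hom P X) (qY : Hom P Y)
    (fxid : Hom P K) :
  is_product qX qY -> Mono f ->
  comp pW fxid = comp f qX -> comp pY fxid = qY -> Mono fxid.
Proof.
  intros HP Hf E1 E2 Z u v E. apply (product_ext HP).
  - apply Hf. rewrite !comp_assoc, <- E1, <- !comp_assoc, E. reflexivity.
  - rewrite <- E2, <- !comp_assoc, E. reflexivity.
Qed.

Definition mono_span (A B : C) (m : Hom A B) (Hm : Mono m) : Span A B :=
  {| apex := A; sp := idm A; si := m;
     sp_epi := split_epi (comp_id_l (idm A)); si_mono := Hm |}.

Definition epi_span (M K : C) (e : Hom K M) (He : Epi e) : Span M K :=
  {| apex := K; sp := e; si := idm K; sp_epi := He; si_mono := @mono_id K |}.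

Lemma span_le_epi_span (M K : C) (e : Hom K M) (He : Epi e) (s : Span M K) :
  comp e (si s) = sp s -> span_le s (epi_span He).
Proof.
  intros E. exists (si s). split; [apply si_mono|split].
  - exact E.
  - apply comp_id_l.
Qed.

Lemma comp_projection_span (M M' K : C) (pr1 : Hom K M') (pr2 : Hom K M)
    (HK : is_product pr1 pr2) (e1 : Epi pr1) (e2 : Epi pr2)
    (Hprod : forall A B : C, exists (P : C) (p1 : Hom P A) (p2 : Hom P B),
               is_product p1 p2)
    (f : Span M M') :
  exists hf, is_span_comp f (epi_span e1) hf /\ span_equiv hf (epi_span e2).
Proof.
  destruct f as [N p i pe im]; simpl.
  destruct (Hprod N M) as [P [pN [pM HP]]].
  destruct (HK P (comp i pN) pM) as [ixid [[Hx1 Hx2] _]].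
  destruct (HK N i p) as [g [[Hg1 Hg2] _]].
  destruct (HP N (idm N) p) as [j [[Hj1 Hj2] _]].
  assert (ixid_mono : Mono ixid) by exact (mono_product_map HP im Hx1 Hx2).
  assert (g_mono : Mono g).
  { apply (@mono_of_comp_mono _ _ _ g pr1). rewrite Hg1. exact im. }
  (* the composite  M <<- N x M >-> K,  computed by the pullback *)
  pose (hf := {| apex := P; sp := comp p pN; si := ixid;
                 sp_epi := epi_comp (split_epi Hj1) pe;
                 si_mono := ixid_mono |} : Span M K).
  (* the intermediate span  M <<-p- N >-<i,p>-> K *)
  pose (G := {| apex := N; sp := p; si := g;
                sp_epi := pe; si_mono := g_mono |} : Span M K).
  assert (G_le_hf : span_le G hf).
  { exists j. simpl. split; [exact (split_mono Hj1)|split].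
    - rewrite <- comp_assoc, Hj1, comp_id_r. reflexivity.
    - apply (product_ext HK).
      + rewrite comp_assoc, Hx1, <- comp_assoc, Hj1, comp_id_r, Hg1.
        reflexivity.
      + rewrite comp_assoc, Hx2, Hj2, Hg2. reflexivity. }
  exists hf. split.
  - exists pN, ixid. simpl. split; [|split; [reflexivity|]].
    + exact (pullback_along_projection HK HP Hx1 Hx2).
    + symmetry. apply comp_id_l.
  - apply rst_trans with G.
    + apply rst_sym, rst_step. exact G_le_hf.
    + apply rst_step, span_le_epi_span. exact Hg2.
Qed.

End Generalities.

Theorem mainTheorem4 : forall C : Category, IsAbelian C -> QtildeFiltered C.
Proof.
  intros C [[Z HZ] [Hprod _]].
  pose proof (zero_obj_homs HZ) as Hhom.
  split; [exists Z; exact I|split].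
  - intros M1 M2. destruct (Hprod M1 M2) as [P [q1 [q2 HP]]].
    destruct (product_proj_section Hhom HP) as [s1 Hs1].
    destruct (product_proj_section Hhom (product_sym HP)) as [s2 Hs2].
    exists P, (mono_span (split_mono Hs1)), (mono_span (split_mono Hs2)).
    exact I.
  - intros M M' f g.
    destruct (Hprod M' M) as [K [pr1 [pr2 HK]]].
    destruct (product_proj_section Hhom HK) as [s1 Hs1].
    destruct (product_proj_section Hhom (product_sym HK)) as [s2 Hs2].
    pose proof (split_epi Hs1) as e1. pose proof (split_epi Hs2) as e2.
    destruct (comp_projection_span HK e1 e2 Hprod f) as [hf [Hf Ef]].
    destruct (comp_projection_span HK e1 e2 Hprod g) as [hg [Hg Eg]].
    exists K, (epi_span e1), hf, hg. split; [exact Hf|split; [exact Hg|]].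
    apply rst_trans with (epi_span e2); [exact Ef|apply rst_sym; exact Eg].
Qed.
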